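(* Let $Z = (G, c) \subseteq \mathbb{R}^{n_x}$ be a zonotope with $G = [g_1, \dots, g_N]$, let $W \subseteq \mathbb{R}^{n_w}$ be a polytope with vertex set $V = \{w_1, \dots, w_M\}$ ($W$ is the convex hull of $V$), let $E \in \mathbb{R}^{n_x \times n_w}$, and let $H \in \mathbb{R}^{L \times n_x}$, $h \in \mathbb{R}^L$ satisfy $EW = \{x \mid Hx \leq h\}$. Let $b_1, \dots, b_N > 0$ and $d_1, \dots, d_N \geq 0$ be constants. Let $(\theta, \overline{\alpha}, \overline{c})$ be a minimizer of $$\min_{\theta, \alpha, c'} \sum_{i=1}^N b_i \alpha_i \ \text{ s.t. } \ \forall j: c' + \sum_{i=1}^N \theta_{ij} g_i = E w_j, \ |\theta_{ij}| \leq \alpha_i \leq 1 \ (i=1,\dots,N),$$ and set $\overline{\mathfrak{Z}}(Z, EW) = ([\overline{\alpha}_1 g_1, \dots, \overline{\alpha}_N g_N], \overline{c})$. Let $(\underline{\alpha}, \underline{c})$ be a maximizer of $$\max_{\alpha, c'} \sum_{i=1}^N d_i \log(\alpha_i) \ \text{ s.t. } \ H c' + |HG|\alpha \leq h, \ 0 \leq \alpha \leq 1,$$ and set $\underline{\mathfrak{Z}}(Z, EW) = ([\underline{\alpha}_1 g_1, \dots, \underline{\alpha}_N g_N], \underline{c})$. Then $$Z \ominus \overline{\mathfrak{Z}}(Z, EW) \subseteq Z \ominus EW \subseteq Z \ominus \underline{\mathfrak{Z}}(Z, EW),$$ and moreover $Z \ominus \overline{\mathfrak{Z}}(Z, EW)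 = ([(1-\overline{\alpha}_1) g_1, \dots, (1-\overline{\alpha}_N) g_N], c - \overline{c})$ and $Z \ominus \underline{\mathfrak{Z}}(Z, EW) = ([(1-\underline{\alpha}_1) g_1, \dots, (1-\underline{\alpha}_N) g_N], c - \underline{c})$.
   Context: A zonotope with generator-representation $(G, c)$, where $G = [g_1, \dots, g_N] \in \mathbb{R}^{n \times N}$ and $c \in \mathbb{R}^n$, is the set $\{c + \sum_{i=1}^N \theta_i g_i \mid \theta_i \in [-1,1]\}$; it is denoted $(G, c)$. $EW = \{Ew \mid w \in W\}$; $|HG|$ is the entrywise absolute value of $HG$; vector inequalities are entrywise. The Minkowski difference is $X \ominus Y = \{z \mid z + Y \subseteq X\}$. *)

From HB Require Import structures.
From mathcomp Require Import all_boot all_order all_algebra.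
From mathcomp Require Import all_classical all_reals all_analysis.
Set Implicit Arguments. Unset Strict Implicit. Unset Printing Implicit Defensive.
Import Order.TTheory GRing.Theory Num.Theory.
Local Open Scope classical_set_scope.
Local Open Scope ring_scope.

Section Defs.
Variable R : realType.

Definition zonotope (n N : nat) (G : 'M[R]_(n, N)) (c : 'cV[R]_n) : set 'cV[R]_n :=
  [set x | exists theta : 'cV[R]_N, (forall i, `|theta i 0| <= 1) /\ x = c + G *m theta].

Definition mink_diff (n : nat) (X Y : set 'cV[R]_n) : set 'cV[R]_n :=
  [set z | forall y, Y y -> X (z + y)].

Definition lin_image (m n : nat) (E : 'M[R]_(m, n)) (W : set 'cV[R]_n) : set 'cV[R]_m :=
  [set E *m w | w in W].

Definition conv_hull (n M : nat) (w : 'I_M -> 'cV[R]_n) : set 'cV[R]_n :=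
  [set x | exists lam : 'I_M -> R, (forall j, 0 <= lam j) /\ \sum_j lam j = 1 /\
                                   x = \sum_j lam j *: w j].

Definition extreme_point (n : nat) (W : set 'cV[R]_n) (x : 'cV[R]_n) : Prop :=
  W x /\ forall a b t, W a -> W b -> 0 < t < 1 -> x = t *: a + (1 - t) *: b -> a = x /\ b = x.

Definition scale_gens (n N : nat) (G : 'M[R]_(n, N)) (alpha : 'cV[R]_N) : 'M[R]_(n, N) :=
  \matrix_(k, i) (alpha i 0 * G k i).

Definition vle (n : nat) (u v : 'cV[R]_n) : Prop := forall k, u k 0 <= v k 0.

Definition mabs (m n : nat) (A : 'M[R]_(m, n)) : 'M[R]_(m, n) := map_mx Num.norm A.

Definition outer_feasible (nx nw N M : nat) (G : 'M[R]_(nx, N)) (E : 'M[R]_(nx, nw))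
    (w : 'I_M -> 'cV[R]_nw) (theta : 'M[R]_(N, M)) (alpha : 'cV[R]_N) (c' : 'cV[R]_nx) : Prop :=
  (forall j, c' + \sum_i theta i j *: col i G = E *m w j) /\
  (forall i j, `|theta i j| <= alpha i 0) /\ (forall i, alpha i 0 <= 1).

Definition outer_obj (N : nat) (b : 'I_N -> R) (alpha : 'cV[R]_N) : R :=
  \sum_i b i * alpha i 0.

Definition outer_minimizer (nx nw N M : nat) (G : 'M[R]_(nx, N)) (E : 'M[R]_(nx, nw))
    (w : 'I_M -> 'cV[R]_nw) (b : 'I_N -> R)
    (theta : 'M[R]_(N, M)) (alpha : 'cV[R]_N) (c' : 'cV[R]_nx) : Prop :=
  outer_feasible G E w theta alpha c' /\
  forall theta2 alpha2 c2, outer_feasible G E w theta2 alpha2 c2 ->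
    outer_obj b alpha <= outer_obj b alpha2.

(* Inner problem.  log is extended-real valued: log 0 = -oo (log x for x > 0). *)
Definition elog (x : R) : \bar R := if 0 < x then (ln x)%:E else -oo%E.

Definition inner_feasible (nx N L : nat) (G : 'M[R]_(nx, N)) (H : 'M[R]_(L, nx))
    (h : 'cV[R]_L) (alpha : 'cV[R]_N) (c' : 'cV[R]_nx) : Prop :=
  vle (H *m c' + mabs (H *m G) *m alpha) h /\ (forall i, 0 <= alpha i 0 <= 1).

Definition inner_obj (N : nat) (d : 'I_N -> R) (alpha : 'cV[R]_N) : \bar R :=
  (\sum_i (d i)%:E * elog (alpha i ord0))%E.

Definition inner_maximizer (nx N L : nat) (G : 'M[R]_(nx, N)) (H : 'M[R]_(L, nx))
    (h : 'cV[R]_L) (d : 'I_N -> R) (alpha : 'cV[R]_N) (c' : 'cV[R]_nx) : Prop :=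
  inner_feasible G H h alpha c' /\
  forall alpha2 c2, inner_feasible G H h alpha2 c2 ->
    (inner_obj d alpha2 <= inner_obj d alpha)%E.

End Defs.

From HB Require Import structures.
From mathcomp Require Import all_boot all_order all_algebra.
From mathcomp Require Import all_classical all_reals all_analysis.
From mathcomp Require Import ring lra.
Set Implicit Arguments.
Unset Strict Implicit.
Unset Printing Implicit Defensive.

Import Order.TTheory GRing.Theory Num.Theory.
Local Open Scope classical_set_scope.
Local Open Scope ring_scope.

(* Write Z_r(c) for the image of the box |mu_i| <= r_i under mu |-> c + G mu;
   for r >= 0 it is the zonotope ([r_1 g_1, ..., r_N g_N], c).  The heart of the
   matter is Z_1(c) ⊖ Z_a(c0) = Z_(1-a)(c - c0) for 0 <= a <= 1, valid even
   for linearly dependent generators: if z + a_k g_k and z - a_k g_k both lie in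
   Z_r, a convex combination of their coefficient vectors, corrected along g_k,
   puts z in Z_r with r_k lowered by a_k; peeling off the generators one at a
   time gives the inclusion.  The chain of inclusions follows because ⊖ is
   antitone in its second argument: outer feasibility puts every vertex E w_j,
   hence all of EW, in the outer zonotope, and inner feasibility gives
   H x <= H c + |HG| alpha <= h on the inner one.  Optimality is only used to
   see that alpha_o >= 0. *)

Lemma mulmx_sum_col (R : comPzRingType) m n (A : 'M[R]_(m, n)) (v : 'cV[R]_n) :
  A *m v = \sum_i v i 0 *: col i A.
Proof.
apply/matrixP=> k l; rewrite !mxE summxE; apply: eq_bigr => i _.
by rewrite !mxE (ord1 l) mulrC.
Qed.

Lemma convex_comb_norm_le (R : realFieldType) (p q r : R) :
  0 <= r -> p <= r -> - r <= q ->
  exists2 l, 0 <= l <= 1 & `|l * p + (1 - l) * q| <= r.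
Proof.
move=> r_ge0 p_le q_ge.
have [p_ge|p_lt] := lerP (- r) p.
  exists 1; first by rewrite ler01 lexx.
  by rewrite subrr mul0r addr0 mul1r ler_norml p_ge p_le.
have [q_le|q_gt] := lerP q r.
  exists 0; first by rewrite ler01 lexx.
  by rewrite subr0 mul0r add0r mul1r ler_norml q_le q_ge.
have qp_gt0 : 0 < q - p by lra.
exists (q / (q - p)).
  by rewrite divr_ge0 ?ler_pdivrMr ?mul1r; lra.
suff -> : q / (q - p) * p + (1 - q / (q - p)) * q = 0 by rewrite normr0.
by field; rewrite gt_eqF.
Qed.

Section ZonotopeBox.
Context {R : realType} {n N : nat} (G : 'M[R]_(n, N)).

Definition zonotope_box (r : 'cV[R]_N) (c : 'cV[R]_n) : set 'cV[R]_n :=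
  [set x | exists mu : 'cV[R]_N, (forall i, `|mu i 0| <= r i 0) /\ x = c + G *m mu].

Lemma zonotope_box1 (c : 'cV[R]_n) : zonotope G c = zonotope_box (const_mx 1) c.
Proof.
by apply/seteqP; split=> _ [mu [mu_le ->]]; exists mu; split=> // i;
  move: (mu_le i); rewrite mxE.
Qed.

Lemma zonotope_box_sub_scale_gens (a : 'cV[R]_N) (c : 'cV[R]_n) :
  zonotope_box a c `<=` zonotope (scale_gens G a) c.
Proof.
move=> _ [mu [mu_le ->]]; exists (\col_i (mu i 0 / a i 0)); split.
  move=> i; rewrite mxE; have [a0|a_neq0] := eqVneq (a i 0) 0.
    by rewrite a0 invr0 mulr0 normr0.
  have a_gt0 : 0 < a i 0 by rewrite lt_def a_neq0 (le_trans _ (mu_le i)).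
  by rewrite normrM normfV (gtr0_norm a_gt0) ler_pdivrMr // mul1r.
congr (_ + _); apply/matrixP=> k l; rewrite !mxE; apply: eq_bigr => i _.
rewrite !mxE (ord1 l); have [a0|a_neq0] := eqVneq (a i 0) 0; last by field.
by move: (mu_le i); rewrite a0 normr_le0 => /eqP ->; rewrite !mulr0 !mul0r.
Qed.

Lemma zonotope_scale_gens_sub_box (a : 'cV[R]_N) (c : 'cV[R]_n) :
  (forall i, 0 <= a i 0) ->
  zonotope (scale_gens G a) c `<=` zonotope_box a c.
Proof.
move=> a_ge0 _ [th [th_le ->]]; exists (\col_i (a i 0 * th i 0)); split.
  by move=> i; rewrite mxE normrM ger0_norm // ler_piMr.
congr (_ + _); apply/matrixP=> k l; rewrite !mxE; apply: eq_bigr => i _.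
by rewrite !mxE (ord1 l) mulrCA mulrA.
Qed.

Lemma conv_hull_sub_zonotope_box M (x : 'I_M -> 'cV[R]_n) (r : 'cV[R]_N) c :
  (forall j, zonotope_box r c (x j)) -> conv_hull x `<=` zonotope_box r c.
Proof.
move=> /choice[mu x_mu] _ [lam [lam_ge0 [lam_sum1 ->]]].
exists (\sum_j lam j *: mu j); split.
  move=> i; rewrite summxE; apply: le_trans (ler_norm_sum _ _ _) _.
  rewrite -[r i 0]mul1r -lam_sum1 mulr_suml; apply: ler_sum => j _.
  by rewrite mxE normrM ger0_norm // ler_wpM2l // (proj1 (x_mu j)).
rewrite mulmx_sumr -[c]scale1r -lam_sum1 scaler_suml -big_split /=.
by apply: eq_bigr => j _; rewrite (proj2 (x_mu j)) scalerDr scalemxAr.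
Qed.

Lemma zonotope_box_segment (r : 'cV[R]_N) (c z : 'cV[R]_n) (k : 'I_N) (a : R) :
  0 <= a <= r k 0 ->
  zonotope_box r c (z + a *: col k G) -> zonotope_box r c (z - a *: col k G) ->
  zonotope_box (r - a *: delta_mx k 0) c z.
Proof.
move=> /andP[a_ge0 a_le] [m1 [m1_le z1E]] [m2 [m2_le z2E]].
have [l /andP[l_ge0 l_le1] l_mid] : exists2 l, 0 <= l <= 1 &
    `|l * (m1 k 0 - a) + (1 - l) * (m2 k 0 + a)| <= r k 0 - a.
  have := m1_le k; have := m2_le k; rewrite !ler_norml => /andP[? ?] /andP[? ?].
  apply: convex_comb_norm_le; lra.
(* z is the l-average of z + a g_k and z - a g_k, moved back by (2l - 1) a g_k *)
exists (l *: m1 + (1 - l) *: m2 - ((2 * l - 1) * a) *: delta_mx k 0); split.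
  move=> i; rewrite !mxE eqxx andbT; have [->|_] := eqVneq i k.
    by rewrite mulr1n mulr1; congr (`|_| <= _): l_mid; ring.
  have := m1_le i; have := m2_le i; rewrite !ler_norml => /andP[? ?] /andP[? ?].
  by rewrite mulr0n !mulr0 !subr0; apply/andP; split; nra.
have G1 : G *m m1 = z + a *: col k G - c by rewrite z1E addrC addKr.
have G2 : G *m m2 = z - a *: col k G - c by rewrite z2E addrC addKr.
rewrite mulmxBr !mulmxDr -!scalemxAr G1 G2 -colE.
by apply/matrixP=> i j; rewrite !mxE; ring.
Qed.

Lemma zonotope_box_shrink (a r : 'cV[R]_N) (c z : 'cV[R]_n) :
  (forall i, 0 <= a i 0 <= r i 0) ->
  (forall phi : 'cV[R]_N, (forall i, `|phi i 0| <= a i 0) ->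
     zonotope_box r c (z + G *m phi)) ->
  zonotope_box (r - a) c z.
Proof.
(* induction on a list containing the support of a, one generator per step *)
have : forall i, i \notin enum 'I_N -> a i 0 = 0 by move=> i; rewrite mem_enum.
elim: (enum 'I_N) a r => [|k s IH] a r a_supp a_le z_phi.
  have a0 : a = 0 by apply/matrixP=> i j; rewrite (ord1 j) mxE a_supp.
  move: (z_phi 0); rewrite a0 subr0 mulmx0 addr0; apply=> i.
  by rewrite !mxE normr0.
pose ak : 'cV[R]_N := a k 0 *: delta_mx k 0.
have -> : r - a = r - ak - (a - ak) by rewrite opprB addrA subrK.
apply: IH => [i i_notin|i|phi phi_le].
- rewrite !mxE andbT; have [->|i_neq] := eqVneq i k; first by rewrite mulr1 subrr.
  by rewrite mulr0 subr0 a_supp // inE negb_or i_neq.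
- rewrite !mxE andbT; have [->|_] := eqVneq i k; last by rewrite !mulr0 !subr0.
  by rewrite mulr1 subrr lexx subr_ge0; case/andP: (a_le k).
have phi_k0 : phi k 0 = 0.
  apply/normr0_eq0/le_anti; rewrite normr_ge0 andbT (le_trans (phi_le k)) //.
  by rewrite !mxE eqxx mulr1 subrr.
have z_shift e : `|e| <= a k 0 -> zonotope_box r c (z + G *m phi + e *: col k G).
  move=> e_le; rewrite colE scalemxAr -addrA -mulmxDr; apply: z_phi => i.
  move: (phi_le i); rewrite !mxE andbT; have [->|_] := eqVneq i k.
    by move=> _; rewrite phi_k0 add0r mulr1.
  by rewrite mulr0n !mulr0 addr0 subr0.
apply: zonotope_box_segment; first exact: a_le.
  by apply: z_shift; rewrite ger0_norm //; case/andP: (a_le k).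
by rewrite -scaleNr; apply: z_shift; rewrite normrN ger0_norm //; case/andP: (a_le k).
Qed.

Lemma mink_diff_zonotope_scale_gens (a : 'cV[R]_N) (c c0 : 'cV[R]_n) :
  (forall i, 0 <= a i 0 <= 1) ->
  mink_diff (zonotope G c) (zonotope (scale_gens G a) c0) =
  zonotope (scale_gens G (const_mx 1 - a)) (c - c0).
Proof.
move=> a01; have a_ge0 i : 0 <= a i 0 by case/andP: (a01 i).
have a'_ge0 i : 0 <= (const_mx 1 - a) i 0.
  by rewrite !mxE subr_ge0; case/andP: (a01 i).
apply/seteqP; split=> [z Zz|].
  have : zonotope_box (const_mx 1 - a) c (z + c0).
    apply: zonotope_box_shrink => [i|phi phi_le]; first by rewrite mxE.
    rewrite -addrA -zonotope_box1; apply: Zz; apply: zonotope_box_sub_scale_gens.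
    by exists phi.
  case=> mu [mu_le zE]; apply: zonotope_box_sub_scale_gens; exists mu; split=> //.
  by rewrite -[z](addrK c0) zE addrAC.
move=> _ /(zonotope_scale_gens_sub_box a'_ge0) [mu [mu_le ->]].
move=> _ /(zonotope_scale_gens_sub_box a_ge0) [phi [phi_le ->]].
rewrite zonotope_box1; exists (mu + phi); split.
  move=> i; rewrite !mxE; apply: le_trans (ler_normD _ _) _.
  by move: (mu_le i) (phi_le i); rewrite !mxE; lra.
by rewrite mulmxDr addrACA subrK.
Qed.

End ZonotopeBox.

Section ZonotopeBounds.
Context {R : realType} {nx nw N M L : nat}.

Lemma mink_diffS (X Y1 Y2 : set 'cV[R]_nx) :
  Y1 `<=` Y2 -> mink_diff X Y2 `<=` mink_diff X Y1.
Proof. by move=> Y12 z Xz y /Y12; exact: Xz. Qed.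

Lemma lin_image_conv_hull (E : 'M[R]_(nx, nw)) (w : 'I_M -> 'cV[R]_nw) :
  lin_image E (conv_hull w) = conv_hull (fun j => E *m w j).
Proof.
have E_comb lam : E *m (\sum_j lam j *: w j) = \sum_j lam j *: (E *m w j).
  by rewrite mulmx_sumr; apply: eq_bigr => j _; rewrite scalemxAr.
apply/seteqP; split=> [_ [_ [lam [lam_ge0 [lam_sum1 ->]]] <-]|].
  by exists lam; rewrite E_comb.
move=> _ [lam [lam_ge0 [lam_sum1 ->]]].
by exists (\sum_j lam j *: w j); [exists lam | rewrite E_comb].
Qed.

Lemma outer_feasible_vertex (G : 'M[R]_(nx, N))
    (E : 'M[R]_(nx, nw)) (w : 'I_M -> 'cV[R]_nw) (theta : 'M[R]_(N, M))
    (alpha : 'cV[R]_N) (c' : 'cV[R]_nx) :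
  outer_feasible G E w theta alpha c' ->
  forall j, zonotope_box G alpha c' (E *m w j).
Proof.
case=> [w_eq [theta_le _]] j; exists (col j theta); split=> [i|]; first by rewrite mxE.
by rewrite -w_eq mulmx_sum_col; congr (_ + _); apply: eq_bigr => i _; rewrite mxE.
Qed.

Lemma outer_minimizer_alpha_ge0 (G : 'M[R]_(nx, N))
    (E : 'M[R]_(nx, nw)) (w : 'I_M -> 'cV[R]_nw) (b : 'I_N -> R)
    (theta : 'M[R]_(N, M)) (alpha : 'cV[R]_N) (c' : 'cV[R]_nx) :
  (forall i, 0 < b i) -> outer_minimizer G E w b theta alpha c' ->
  forall i, 0 <= alpha i 0.
Proof.
move=> b_gt0 [[w_eq [theta_le alpha_le1]] alpha_min] i.
have [M0|M_gt0] := posnP M; last exact: le_trans (theta_le i (Ordinal M_gt0)).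
have no_vertex (j : 'I_M) : False by have := ltn_ord j; rewrite [X in (_ < X)%N]M0.
(* without vertices, lowering alpha_i by 1 stays feasible and lowers the cost by b_i *)
have : outer_feasible G E w theta (alpha - delta_mx i 0) c'.
  split=> [j|]; first by case: (no_vertex j).
  split=> [k j|k]; first by case: (no_vertex j).
  by rewrite !mxE; apply: le_trans (alpha_le1 k); rewrite gerBl ler0n.
have cost_drop : outer_obj b (alpha - delta_mx i 0) = outer_obj b alpha - b i.
  rewrite /outer_obj (bigD1 i) //= [X in _ = X - _](bigD1 i) //= !mxE !eqxx.
  rewrite mulrBr mulr1 addrAC; congr (_ + _ - _); apply: eq_bigr => k /negbTE k_neq.
  by rewrite !mxE k_neq mulr0n subr0.
by move/alpha_min; rewrite cost_drop lerBrDr gerDl leNgt b_gt0.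
Qed.

Lemma inner_feasible_sub (G : 'M[R]_(nx, N))
    (H : 'M[R]_(L, nx)) (h : 'cV[R]_L) (alpha : 'cV[R]_N) (c' : 'cV[R]_nx) :
  inner_feasible G H h alpha c' ->
  zonotope (scale_gens G alpha) c' `<=` [set x | vle (H *m x) h].
Proof.
case=> H_le alpha01; have alpha_ge0 i : 0 <= alpha i 0 by case/andP: (alpha01 i).
move=> _ /(zonotope_scale_gens_sub_box alpha_ge0) [mu [mu_le ->]] k.
apply: le_trans (H_le k); rewrite mulmxDr mulmxA [leLHS]mxE [leRHS]mxE lerD2l /mabs !mxE.
by apply: ler_sum => i _; rewrite !mxE (le_trans (ler_norm _)) // normrM ler_wpM2l.
Qed.

End ZonotopeBounds.

Theorem proposition4 (R : realType) (nx nw N M L : nat)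
  (G : 'M[R]_(nx, N)) (c : 'cV[R]_nx)
  (W : set 'cV[R]_nw) (w : 'I_M -> 'cV[R]_nw)
  (E : 'M[R]_(nx, nw)) (H : 'M[R]_(L, nx)) (h : 'cV[R]_L)
  (b d : 'I_N -> R)
  (theta_o : 'M[R]_(N, M)) (alpha_o : 'cV[R]_N) (c_o : 'cV[R]_nx)
  (alpha_u : 'cV[R]_N) (c_u : 'cV[R]_nx) :
  W = conv_hull w ->
  injective w ->
  (forall x, extreme_point W x <-> exists j, x = w j) ->
  lin_image E W = [set x | vle (H *m x) h] ->
  (forall i, 0 < b i) ->
  (forall i, 0 <= d i) ->
  outer_minimizer G E w b theta_o alpha_o c_o ->
  inner_maximizer G H h d alpha_u c_u ->
  let Zs := zonotope G c in
  let Zover := zonotope (scale_gens G alpha_o) c_o in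
  let Zunder := zonotope (scale_gens G alpha_u) c_u in
  [/\ mink_diff Zs Zover `<=` mink_diff Zs (lin_image E W),
      mink_diff Zs (lin_image E W) `<=` mink_diff Zs Zunder,
      mink_diff Zs Zover = zonotope (scale_gens G (const_mx 1 - alpha_o)) (c - c_o)
    & mink_diff Zs Zunder = zonotope (scale_gens G (const_mx 1 - alpha_u)) (c - c_u)].
Proof.
move=> -> _ _ EW_H b_gt0 _ outer_min [inner_feas _] /=.
have alpha_o01 i : 0 <= alpha_o i 0 <= 1.
  by rewrite (outer_minimizer_alpha_ge0 b_gt0 outer_min) outer_min.1.2.2.
split.
- apply: mink_diffS; rewrite lin_image_conv_hull => y EWy.
  apply: zonotope_box_sub_scale_gens; move: y EWy; apply: conv_hull_sub_zonotope_box.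
  exact: outer_feasible_vertex outer_min.1.
- by apply: mink_diffS; rewrite EW_H; exact: inner_feasible_sub inner_feas.
- exact: mink_diff_zonotope_scale_gens.
- exact: mink_diff_zonotope_scale_gens inner_feas.2.
Qed.
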